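(* Let $g:\mathbb{R}\to[0,+\infty)$ be lower semicontinuous and assume there are $a_1>0$, $a_2\in\mathbb{R}$ with $g(\delta)\ge a_1|\delta|+a_2$ for all $\delta\in\mathbb{R}$. Let $f:\mathbb{R}^{N\times N}\to[0,+\infty)$, $f(\xi)=g(\det\xi)$. If $f$ is ${\rm curl}$-$\infty$ quasiconvex, then $g$ is level convex; hence $f$ is polyquasiconvex.
   Context: $Q:=(-\tfrac12,\tfrac12)^N$. A non-negative Borel $f:\mathbb{R}^{N\times N}\to[0,\infty)$ is ${\rm curl}$-$\infty$ quasiconvex if $f(\xi)=\lim_{p\to\infty}\inf\{(\int_Qf^p(\xi+Du(x))dx)^{1/p}:u\in W^{1,\infty}_{\rm per}(Q;\mathbb{R}^N)\}$ for every $\xi$, with $W^{1,\infty}_{\rm per}$ the $Q$-periodic functions in $W^{1,\infty}(\mathbb{R}^N;\mathbb{R}^N)$. Level convex: $g(\lambda s+(1-\lambda)t)\le\max\{g(s),g(t)\}$. Polyquasiconvex: $f=h\circ T$ with $h$ level convex and $T(\xi)$ the vector of all minors of $\xi$. *)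

From HB Require Import structures.
From mathcomp Require Import all_boot all_order all_algebra.
From mathcomp Require Import all_classical all_reals all_analysis.
Set Implicit Arguments. Unset Strict Implicit. Unset Printing Implicit Defensive.
Import Order.TTheory GRing.Theory Num.Theory.
Import numFieldNormedType.Exports.
Local Open Scope classical_set_scope.
Local Open Scope ring_scope.

Section Defs.
Variable R : realType.

Definition Q1 : set R := `](- 2^-1), 2^-1[%classic.

(** Iterated Lebesgue integral over the cube (-1/2,1/2)^k of a non-negative
    function of the coordinates; at level k.+1 the coordinate k is
    integrated (outermost), then coordinates k-1, ..., 0.  By Tonelli this
    is the integral w.r.t. the k-dimensional Lebesgue measure on the cube. *)
Fixpoint cube_iint (k : nat) (G : (nat -> R) -> \bar R) : \bar R :=
  match k with
  | 0%N => G (fun _ => 0)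
  | k'.+1 => (\int[@lebesgue_measure R]_(t in Q1)
               cube_iint k' (fun x => G (fun n => if n == k' then t else x n)))%E
  end.

Definition cube_integral (N : nat) (F : 'rV[R]_N -> \bar R) : \bar R :=
  cube_iint N (fun x => F (\row_(i < N) x (i : nat))).

(** W^{1,oo}_per(Q;R^N): Q-periodic Lipschitz maps R^N -> R^N
    (Lipschitz + periodic = continuous representative of a W^{1,oo} map). *)
Definition W1inf_per (N : nat) (u : 'rV[R]_N -> 'rV[R]_N) : Prop :=
  lipschitz u /\
  forall (j : 'I_N) (x : 'rV[R]_N), u (x + delta_mx 0 j) = u x.

(** Gradient Du(x): (Du(x))_{ij} = partial_j u_i (x) (defined a.e.). *)
Definition grad (N : nat) (u : 'rV[R]_N -> 'rV[R]_N) (x : 'rV[R]_N) : 'M[R]_N :=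
  \matrix_(i < N, j < N) (derive u x (delta_mx 0 j)) 0 i.

Definition Lp_energy (N : nat) (f : 'M[R]_N -> R) (p : R) (xi : 'M[R]_N)
    (u : 'rV[R]_N -> 'rV[R]_N) : \bar R :=
  poweR (cube_integral (fun x => ((f (xi + grad u x)) `^ p)%:E)) p^-1.

(** curl-oo quasiconvexity (f non-negative, Borel: preimages of open sets lie in
    the sigma-algebra generated by the open sets of R^{NxN}). *)
Definition curl_inf_qc (N : nat) (f : 'M[R]_N -> R) : Prop :=
  (forall xi, 0 <= f xi) /\
  (forall A : set R, open A ->
     smallest (sigma_algebra [set: 'M[R]_N]) [set U | open U] (f @^-1` A)) /\
  forall xi : 'M[R]_N,
    (fun p : R => ereal_inf [set Lp_energy f p xi u | u in W1inf_per (N:=N)])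
      @ +oo --> (f xi)%:E.

Definition level_convex (V : lmodType R) (h : V -> R) : Prop :=
  forall (l : R) (s t : V), 0 <= l <= 1 ->
    h (l *: s + (1 - l) *: t) <= Num.max (h s) (h t).

Definition minor_idx (N : nat) :=
  {AB : {set 'I_N} * {set 'I_N} | (#|AB.1| == #|AB.2|) && (0 < #|AB.1|)%N}.

Definition minor (N : nat) (xi : 'M[R]_N) (ab : minor_idx N) : R :=
  let E := eqP (andP (valP ab)).1 in
  \det (\matrix_(i, j) xi (enum_val i) (enum_val (cast_ord E j))).

Definition minors (N : nat) (xi : 'M[R]_N) : {ffun minor_idx N -> R} :=
  [ffun ab => minor xi ab].

Definition polyquasiconvex (N : nat) (f : 'M[R]_N -> R) : Prop :=
  exists h : {ffun minor_idx N -> R} -> R,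
    level_convex h /\ forall xi, f xi = h (minors xi).

End Defs.

(* Fix [s], [t] and [0 < l < 1], and put [c = l s + (1 - l) t].  With
   [xi = diag(c, 1, ..., 1)] and the Q-periodic laminate
   [u(x) = (s - t) tent(x_1) e_1], where [tent] is the 1-periodic tent with
   slopes [1 - l] and [- l], the matrix [xi + Du(x)] is [diag(s, 1, ..., 1)] or
   [diag(t, 1, ..., 1)] off a null set.  Hence every [L^p] energy of [u] at
   [xi] is at most [max (g s) (g t)], and letting [p -> oo] in the definition
   of curl-oo quasiconvexity gives [g c <= max (g s) (g t)].  Polyquasiconvexity
   follows by reading [det xi] off the vector of minors. *)

From HB Require Import structures.
From mathcomp Require Import all_boot all_order all_algebra.
From mathcomp Require Import all_classical all_reals all_analysis.
From mathcomp Require Import measurable_realfun lra ring.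
Set Implicit Arguments. Unset Strict Implicit. Unset Printing Implicit Defensive.
Import Order.TTheory GRing.Theory Num.Theory.
Import numFieldNormedType.Exports.
Local Open Scope classical_set_scope.
Local Open Scope ring_scope.

Section integral_bounds.
Variable R : realType.
Local Notation mu := (@lebesgue_measure R).
Local Open Scope ereal_scope.

(* No measurability is required: this is monotonicity of the supremum over
   simple minorants that defines the integral of a non-negative function. *)
Lemma ge0_le_integral_nonmeas (D : set R) (f1 f2 : R -> \bar R) :
  (forall x, D x -> 0 <= f1 x) -> (forall x, D x -> 0 <= f2 x) ->
  (forall x, D x -> f1 x <= f2 x) ->
  \int[mu]_(x in D) f1 x <= \int[mu]_(x in D) f2 x.
Proof.
move=> f10 f20 f12; rewrite !ge0_integralE //=.
apply: ereal_sup_le => _ [h hf1 <-]; exists h => //= x.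
apply: le_trans (hf1 x) _; rewrite /patch; case: ifP => // /set_mem Dx.
exact: f12.
Qed.

Lemma integral_le_off_null (D Z : set R) (f : R -> \bar R) (c : R) :
  measurable D -> measurable Z -> mu Z = 0 -> (0 <= c)%R ->
  (forall x, D x -> 0 <= f x) ->
  (forall x, D x -> ~ Z x -> f x <= c%:E) ->
  \int[mu]_(x in D) f x <= c%:E * mu D.
Proof.
move=> mD mZ muZ c0 f0 fc.
pose F x := if x \in Z then +oo else c%:E.
have F0 x : 0 <= F x by rewrite /F; case: ifP; rewrite // lee_fin.
have mF : measurable_fun [set: R] F.
  apply: (measurable_fun_ifT (f := fun x => x \in Z)) => //.
  apply: (measurable_fun_bool true); rewrite setTI.
  by rewrite (_ : _ @^-1` _ = Z) //; apply/seteqP; split => x /= => [/set_mem|/mem_set].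
apply: (@le_trans _ _ (\int[mu]_(x in D) F x)).
  apply: ge0_le_integral_nonmeas => // x Dx; rewrite /F.
  by case: ifP => [_|/negbT/negP Zx]; [exact: leey|apply: fc => // /mem_set].
rewrite (ge0_negligible_integral _ _ _ _ muZ) //; last exact: measurable_funTS.
rewrite (@eq_integral _ _ _ mu _ (cst c%:E)); last first.
  by move=> x /set_mem[_ Zx]; rewrite /F memNset.
rewrite integral_cst; last exact: measurableD.
by rewrite lee_wpmul2l ?lee_fin // le_measure ?inE //; exact: measurableD.
Qed.

Lemma lebesgue_measure_Q1 : mu (@Q1 R) = 1.
Proof.
rewrite /Q1 lebesgue_measure_itv /= lte_fin gtrN ?invr_gt0 //.
by rewrite -EFinB opprK; congr EFin; rewrite [RHS](splitr 1) mul1r.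
Qed.

Lemma cube_iint_ge0 k (H : (nat -> R) -> \bar R) :
  (forall x, 0 <= H x) -> 0 <= cube_iint k H.
Proof.
elim: k H => [|k IH] H H0 /=; first exact: H0.
by apply: integral_ge0 => t _; exact: IH.
Qed.

(* The exceptional set only constrains [x 0], the innermost variable of
   integration. *)
Lemma cube_iint_le_off_null k (H : (nat -> R) -> \bar R) (Z : set R) (c : R) :
  (0 < k)%N -> measurable Z -> mu Z = 0 -> (0 <= c)%R ->
  (forall x, 0 <= H x) ->
  (forall x, Q1 (x 0%N) -> ~ Z (x 0%N) -> H x <= c%:E) ->
  cube_iint k H <= c%:E.
Proof.
move=> + mZ muZ c0; elim: k H => [//|k IH] H _ H0 Hc /=.
rewrite -[leRHS]mule1 -lebesgue_measure_Q1.
apply: (integral_le_off_null _ mZ muZ) => //; first exact: measurable_itv.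
  by move=> t _; apply: cube_iint_ge0.
case: k IH => [|k] IH t Qt Zt; first exact: Hc.
by apply: IH => // x Qx Zx; exact: Hc.
Qed.

End integral_bounds.

Section tent.
Variable R : realType.

Definition fract (y : R) : R := y - (Num.floor y)%:~R.

Lemma fract_ge0 y : 0 <= fract y.
Proof. by rewrite /fract subr_ge0 floor_le. Qed.

Lemma fract_lt1 y : fract y < 1.
Proof. by rewrite /fract ltrBlDl -intrD1 floorD1_gt. Qed.

Lemma fractD y h : 0 <= fract y + h < 1 -> fract (y + h) = fract y + h.
Proof.
move=> /andP[h0 h1]; rewrite /fract (@floor_def _ _ (Num.floor y)); first lra.
by rewrite intrD1; apply/andP; split; rewrite /fract in h0 h1; lra.
Qed.

Lemma fractD1 y : fract (y + 1) = fract y.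
Proof.
rewrite /fract (@floor_def _ (y + 1) (Num.floor y + 1)); first by rewrite intrD1; lra.
by have := floor_itv y; rewrite !intrD1 => /andP[? ?]; apply/andP; split; lra.
Qed.

Variable l : R.
Hypotheses (l_gt0 : 0 < l) (l_lt1 : l < 1).

Definition tent (y : R) : R := Num.min ((1 - l) * fract y) (l * (1 - fract y)).

Lemma tentD1 y : tent (y + 1) = tent y.
Proof. by rewrite /tent fractD1. Qed.

Lemma tent_up y : fract y <= l -> tent y = (1 - l) * fract y.
Proof. by move=> ?; apply/min_idPl; nra. Qed.

Lemma tent_down y : l <= fract y -> tent y = l * (1 - fract y).
Proof. by move=> ?; apply/min_idPr; nra. Qed.

(* [tent] is the pointwise minimum of the 1-Lipschitz functions [vee m]. *)
Definition vee (m : int) (y : R) : R :=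
  Num.max ((1 - l) * (y - m%:~R)) (l * (m%:~R - y)).

Lemma tent_le_vee m y : tent y <= vee m y.
Proof.
have := floor_itv y; rewrite intrD1 => /andP[fl_le lt_fl].
rewrite /tent /vee ge_min !le_max /fract.
have [le_m|lt_m] := lerP m (Num.floor y).
  have : m%:~R <= (Num.floor y)%:~R :> R by rewrite ler_int.
  by move=> ?; rewrite ler_pM2l ?subr_gt0 //; lra.
have : (Num.floor y)%:~R + 1 <= m%:~R :> R by rewrite -intrD1 ler_int lezD1.
by move=> ?; rewrite [X in _ || (_ || X)]ler_pM2l //; lra.
Qed.

Lemma tent_eq_vee y : exists m, tent y = vee m y.
Proof.
have := fract_ge0 y; have := fract_lt1 y; rewrite /fract => ? ?.
have [le_l|lt_l] := lerP (fract y) l.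
  by exists (Num.floor y); rewrite tent_up // /vee max_l /fract //; nra.
exists (Num.floor y + 1); rewrite tent_down ?ltW // /vee intrD1 max_r /fract.
  by rewrite !mulrBr mulr1; lra.
rewrite /fract in lt_l; nra.
Qed.

Lemma vee_lipschitz m y z : vee m y <= vee m z + `|y - z|.
Proof.
have := ler_norm (y - z); have : z - y <= `|y - z| by rewrite distrC ler_norm.
move=> le_zy le_yz.
have le1 : (1 - l) * (y - z) <= `|y - z|.
  have : 0 <= (1 - l) * (`|y - z| - (y - z)).
    by apply: mulr_ge0; rewrite subr_ge0 // ltW.
  have : 0 <= l * `|y - z| by rewrite mulr_ge0 // ltW.
  lra.
have le2 : l * (z - y) <= `|y - z|.
  have : 0 <= l * (`|y - z| - (z - y)) by rewrite mulr_ge0 ?subr_ge0 // ltW.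
  have : 0 <= (1 - l) * `|y - z| by rewrite mulr_ge0 // subr_ge0 ltW.
  lra.
rewrite /vee ge_max; apply/andP; split; rewrite -lerBlDr.
  by apply: le_trans (_ : (1 - l) * (z - m%:~R) <= _); [lra|rewrite le_max lexx].
by apply: le_trans (_ : l * (m%:~R - z) <= _); [lra|rewrite le_max lexx orbT].
Qed.

Lemma tent_lipschitz y z : `|tent y - tent z| <= `|y - z|.
Proof.
have le_dist a b : tent a - tent b <= `|a - b|.
  have [m ->] := tent_eq_vee b.
  by have := tent_le_vee m a; have := vee_lipschitz m a b; lra.
by rewrite ler_norml le_dist andbT; have := le_dist z y; rewrite distrC; lra.
Qed.

Lemma tent_locally_affine y : fract y != 0 -> fract y != l ->
  exists2 s : R, s = 1 - l \/ s = - l &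
  exists2 e : R, 0 < e & forall h, `|h| < e -> tent (y + h) - tent y = s * h.
Proof.
move=> fy_neq0 fy_neql; have fy_lt1 := fract_lt1 y.
have fy_gt0 : 0 < fract y by rewrite lt_neqAle eq_sym fy_neq0 fract_ge0.
have [lt_l|lt_l] := ltrP (fract y) l; [exists (1 - l); first by left|
  exists (- l); first by right].
- exists (Num.min (fract y) (l - fract y)); first by rewrite lt_min fy_gt0 subr_gt0.
  move=> h; rewrite lt_min !ltr_norml => /andP[/andP[h1 h2] /andP[h3 h4]].
  have hD : 0 <= fract y + h < 1 by apply/andP; split; have := l_lt1; lra.
  by rewrite tent_up ?fractD // ?tent_up //; lra.
- have {}lt_l : l < fract y by rewrite lt_neqAle eq_sym fy_neql.
  exists (Num.min (fract y - l) (1 - fract y)); first by rewrite lt_min !subr_gt0 lt_l.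
  move=> h; rewrite lt_min !ltr_norml => /andP[/andP[h1 h2] /andP[h3 h4]].
  have hD : 0 <= fract y + h < 1 by apply/andP; split; have := l_gt0; lra.
  by rewrite tent_down ?fractD // ?tent_down //; lra.
Qed.

End tent.

Section laminate.
Variables (R : realType) (n : nat).

Lemma mx_entry_le_norm m k (x : 'M[R]_(m, k)) i j : `|x i j| <= `|x|.
Proof.
rewrite [X in _ <= X]/Num.norm /= mx_normrE.
exact: (le_bigmax _ (fun ij : 'I_m * 'I_k => `|x ij.1 ij.2|) (i, j)).
Qed.

Variables (d l : R).
Hypotheses (l_gt0 : 0 < l) (l_lt1 : l < 1).

Definition laminate (x : 'rV[R]_n.+1) : 'rV[R]_n.+1 :=
  (d * tent l (x 0 0)) *: delta_mx 0 0.

Lemma laminate_W1inf_per : W1inf_per laminate.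
Proof.
split.
  exists (`|d| * `|delta_mx 0 0 : 'rV[R]_n.+1|).
  split; first by rewrite realE mulr_ge0.
  move=> M hM [a b] _ /=; rewrite /laminate -scalerBl -mulrBr mx_normZ normrM.
  apply: (@le_trans _ _ (`|d| * `|a - b| * `|delta_mx 0 0 : 'rV[R]_n.+1|)).
    rewrite ler_wpM2r // ler_wpM2l //; apply: le_trans (tent_lipschitz l_gt0 l_lt1 _ _) _.
    by have := mx_entry_le_norm (a - b) 0 0; rewrite !mxE.
  by rewrite mulrAC ler_wpM2r // ltW // (le_lt_trans _ hM).
move=> j x; rewrite /laminate !mxE.
by case: (0 == j); rewrite ?tentD1 ?addr0.
Qed.

Lemma derive_laminate (x : 'rV[R]_n.+1) :
  fract (x 0 0) != 0 -> fract (x 0 0) != l ->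
  exists2 s : R, s = 1 - l \/ s = - l &
  forall j : 'I_n.+1,
    derive laminate x (delta_mx 0 j) = if 0 == j then (d * s) *: delta_mx 0 0 else 0.
Proof.
move=> fx_neq0 fx_neql.
have [s s_slope [e e_gt0 tent_affine]] := tent_locally_affine l_gt0 l_lt1 fx_neq0 fx_neql.
exists s => // j; rewrite /derive.
have [j0|j_neq0] := boolP (0 == j).
  apply: cvg_lim => //; apply: cvg_near_cst.
  apply/nbhs_normP; exists e => //= h h_small h_neq0.
  rewrite /laminate !mxE j0 /= mulr1 [h + _]addrC -scalerBl -mulrBr tent_affine.
    by rewrite scalerA; congr (_ *: _); field.
  by move: h_small; rewrite /ball_ /= sub0r normrN.
rewrite (_ : (fun h => _) = cst 0); first exact: lim_cst.
apply/funext => h; rewrite /laminate /= !mxE (negbTE j_neq0) mulr0 add0r.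
by rewrite subrr scaler0.
Qed.

End laminate.

Section first_diagonal.
Variables (R : realType) (n : nat).

Definition diag_first (a : R) : 'M[R]_n.+1 :=
  diag_mx (\row_(i < n.+1) if i == 0 then a else 1).

Lemma det_diag_first a : \det (diag_first a) = a.
Proof.
rewrite det_diag (bigD1 0) //= mxE eqxx big1 ?mulr1 // => i /negbTE i_neq0.
by rewrite mxE i_neq0.
Qed.

Lemma diag_first_add_grad (c b : R) (u : 'rV[R]_n.+1 -> 'rV[R]_n.+1) x :
  (forall j : 'I_n.+1, derive u x (delta_mx 0 j) = if 0 == j then b *: delta_mx 0 0 else 0) ->
  diag_first c + grad u x = diag_first (c + b).
Proof.
move=> du; apply/matrixP => i j; rewrite !mxE du.
have [j0|j_neq0] := boolP (0 == j).
  by rewrite !mxE -(eqP j0); case: (i == 0); rewrite /= ?mulr1n ?mulr0n ?mulr1 ?mulr0 ?addr0.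
rewrite mxE addr0; have [ij|] := eqVneq i j; last by rewrite !mulr0n.
by rewrite ij eq_sym (negbTE j_neq0).
Qed.

End first_diagonal.

Section kinks.
Variable R : realType.
Local Notation mu := (@lebesgue_measure R).

(* The kinks [k] and [k + l], [k : int], of [tent l]. *)
Definition kinks (l : R) : set R :=
  range (fun kb : int * bool => kb.1%:~R + (if kb.2 then l else 0)).

Lemma countable_kinks l : countable (kinks l).
Proof. exact: sub_countable (card_image_le _ _) (countableP _). Qed.

Lemma measurable_kinks l : measurable (kinks l).
Proof. by apply: countable_measurable (countable_kinks l) => t; exact: measurable_set1. Qed.

Lemma lebesgue_measure_kinks l : mu (kinks l) = 0%E.
Proof. exact: countable_lebesgue_measure0 (countable_kinks l). Qed.

Lemma fract_off_kinks l y : ~ kinks l y -> fract y != 0 /\ fract y != l.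
Proof.
by move=> y_ok; split; apply/eqP; rewrite /fract => fy; apply: y_ok;
  [exists (Num.floor y, false)|exists (Num.floor y, true)] => /=; lra.
Qed.

End kinks.

Section laminate_energy.
Variables (R : realType) (n : nat).

Lemma poweRV_le (I : \bar R) (M p : R) : 0 < p -> 0 <= M ->
  (0 <= I)%E -> (I <= (M `^ p)%:E)%E -> (I `^ p^-1 <= M%:E)%E.
Proof.
move=> p_gt0 M_ge0 I_ge0 I_le.
have pV_ge0 : 0 <= p^-1 by rewrite invr_ge0 ltW.
apply: le_trans (gt0_ler_poweR pV_ge0 _ _ I_le) _.
- by rewrite in_itv /= I_ge0 leey.
- by rewrite in_itv /= lee_fin powR_ge0 leey.
by rewrite poweR_EFin -powRrM mulfV ?gt_eqF // powRr1.
Qed.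

Lemma det_diag_first_add_grad_laminate (s t l : R) (x : 'rV[R]_n.+1) :
  0 < l -> l < 1 -> ~ kinks l (x 0 0) ->
  let xi := diag_first n (l * s + (1 - l) * t) + grad (laminate (s - t) l) x in
  \det xi = s \/ \det xi = t.
Proof.
move=> l_gt0 l_lt1 /fract_off_kinks[fx_neq0 fx_neql] /=.
have [b b_slope du] := derive_laminate (s - t) l_gt0 l_lt1 fx_neq0 fx_neql.
rewrite (diag_first_add_grad _ du) det_diag_first.
by case: b_slope => ->; [left|right]; ring.
Qed.

Lemma Lp_energy_laminate_le (g : R -> R) (s t l p : R) :
  (forall d, 0 <= g d) -> 0 < l -> l < 1 -> 0 < p ->
  (Lp_energy (fun xi : 'M[R]_n.+1 => g (\det xi)) p
     (diag_first n (l * s + (1 - l) * t)) (laminate (s - t) l)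
   <= (Num.max (g s) (g t))%:E)%E.
Proof.
move=> g_ge0 l_gt0 l_lt1 p_gt0.
have M_ge0 : 0 <= Num.max (g s) (g t) by rewrite le_max g_ge0.
apply: poweRV_le => //.
  by apply: cube_iint_ge0 => x; rewrite lee_fin powR_ge0.
apply: (cube_iint_le_off_null _ (measurable_kinks l) (lebesgue_measure_kinks l)).
- by [].
- exact: powR_ge0.
- by move=> x; rewrite lee_fin powR_ge0.
move=> x _ x_ok; rewrite lee_fin; apply: ge0_ler_powR; rewrite ?nnegrE ?(ltW p_gt0) //.
have /= := det_diag_first_add_grad_laminate s t l_gt0 l_lt1 (x := \row_(i < n.+1) x i).
by rewrite mxE => /(_ x_ok)[->|->]; rewrite le_max lexx ?orbT.
Qed.

End laminate_energy.

Section level_convexity.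
Variable R : realType.

Lemma level_convex_of_curl_inf_qc n (g : R -> R) :
  (forall d, 0 <= g d) ->
  curl_inf_qc (fun xi : 'M[R]_n.+1 => g (\det xi)) ->
  level_convex (V := R^o) g.
Proof.
move=> g_ge0 [_ [_ f_lim]] l s t /andP[l_ge0 l_le1].
change (g (l * s + (1 - l) * t) <= Num.max (g s) (g t)).
have [->|l_neq0] := eqVneq l 0.
  by rewrite mul0r add0r subr0 mul1r le_max lexx orbT.
have [->|l_neq1] := eqVneq l 1.
  by rewrite mul1r subrr mul0r addr0 le_max lexx.
have l_gt0 : 0 < l by rewrite lt_neqAle eq_sym l_neq0.
have l_lt1 : l < 1 by rewrite lt_neqAle l_neq1.
have := f_lim (diag_first n (l * s + (1 - l) * t)); rewrite det_diag_first.
move/cvge_to_le; rewrite -lee_fin; apply; exists 0; split; first exact: real0.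
move=> p p_gt0; apply: le_trans (ereal_inf_lbound _) _.
  by exists (laminate (s - t) l); first exact: laminate_W1inf_per.
exact: Lp_energy_laminate_le.
Qed.

End level_convexity.

Section polyquasiconvexity.
Variables (R : realType) (n : nat).

Lemma det_castmx m k (e : m = k) (A : 'M[R]_k) :
  \det (\matrix_(i, j) A (cast_ord e i) (cast_ord e j)) = \det A.
Proof.
case: k / e A => A; congr (\det _); apply/matrixP => i j.
by rewrite mxE !cast_ord_id.
Qed.

Lemma minor_full_subproof :
  (#|[set: 'I_n.+1]%SET| == #|[set: 'I_n.+1]%SET|) && (0 < #|[set: 'I_n.+1]%SET|)%N.
Proof. by rewrite eqxx cardsT card_ord. Qed.

Definition minor_full : minor_idx n.+1 :=
  exist _ ([set: 'I_n.+1]%SET, [set: 'I_n.+1]%SET) minor_full_subproof.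

Lemma minor_full_det (xi : 'M[R]_n.+1) : minor xi minor_full = \det xi.
Proof.
have card_full : #|[set: 'I_n.+1]%SET| = n.+1 by rewrite cardsT card_ord.
rewrite /minor -(det_castmx card_full xi); congr (\det _); apply/matrixP => i j.
have enum_val_full (k : 'I_#|[set: 'I_n.+1]%SET|) : enum_val k = cast_ord card_full k.
  apply: val_inj; rewrite /= (enum_val_nth ord0) enum_setT -enumT nth_enum_ord //.
  by rewrite -[X in (_ < X)%N]card_full ltn_ord.
by rewrite !mxE !enum_val_full; congr (xi _ _); apply: val_inj.
Qed.

Lemma polyquasiconvex_det (g : R -> R) : level_convex (V := R^o) g ->
  polyquasiconvex (fun xi : 'M[R]_n.+1 => g (\det xi)).
Proof.
move=> g_lc; exists (fun v => g (v minor_full)); split.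
  by move=> l v w l01; rewrite !ffunE; exact: g_lc.
by move=> xi; rewrite ffunE minor_full_det.
Qed.

End polyquasiconvexity.

Theorem mainTheorem14 (R : realType) (N : nat) (g : R -> R) (a1 a2 : R) :
  (0 < N)%N ->
  (forall d, 0 <= g d) ->
  lower_semicontinuous (fun d => (g d)%:E) ->
  0 < a1 ->
  (forall d, a1 * `|d| + a2 <= g d) ->
  curl_inf_qc (fun xi : 'M[R]_N => g (\det xi)) ->
  level_convex (V := R^o) g /\
  polyquasiconvex (fun xi : 'M[R]_N => g (\det xi)).
Proof.
case: N => [//|n] _ g_ge0 _ _ _ f_qc.
have g_lc := level_convex_of_curl_inf_qc g_ge0 f_qc.
by split => //; exact: polyquasiconvex_det.
Qed.
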